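(* Let $\mathcal{X}=\{A\in\mathcal{M}_d: A=A^\dagger,\ \operatorname{tr}A=0\}$ as a real vector space, let $\mathcal{V}=\{A\mapsto UAU^\dagger: U\in\mathcal{M}_d\text{ unitary}\}$ regarded as real-linear maps on $\mathcal{X}$, and let $\mathrm{zerospan}_{\mathbb{R}}\mathcal{V}=\{\sum_i\lambda_iV_i:\ V_i\in\mathcal{V},\ \lambda_i\in\mathbb{R},\ \sum_i\lambda_i=0\}$ (finite sums). Then $\mathrm{zerospan}_{\mathbb{R}}\mathcal{V}=\mathcal{B}(\mathcal{X})$, the space of all real-linear maps $\mathcal{X}\to\mathcal{X}$. *)

From HB Require Import structures.
From mathcomp Require Import all_boot all_order all_algebra.
From mathcomp Require Import complex.
From mathcomp Require Import reals.
Set Implicit Arguments. Unset Strict Implicit. Unset Printing Implicit Defensive.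
Import Order.TTheory GRing.Theory Num.Theory.
Local Open Scope ring_scope.
Local Open Scope complex_scope.

Definition adjmx (R : realType) (d : nat) (A : 'M[R[i]]_d) : 'M[R[i]]_d :=
  (map_mx (@conjc R) A)^T.

Definition inX (R : realType) (d : nat) (A : 'M[R[i]]_d) : bool :=
  (A == adjmx A) && (\tr A == 0).

Definition unitary (R : realType) (d : nat) (U : 'M[R[i]]_d) : bool :=
  U *m adjmx U == 1%:M.

(* f is (the representative of) a real-linear map X -> X *)
Definition real_linear_on_X (R : realType) (d : nat) (f : 'M[R[i]]_d -> 'M[R[i]]_d) : Prop :=
  (forall A, inX A -> inX (f A)) /\
  (forall (a : R) A B, inX A -> inX B -> f (a%:C *: A + B) = a%:C *: f A + f B).

Definition in_zerospan_V (R : realType) (d : nat) (f : 'M[R[i]]_d -> 'M[R[i]]_d) : Prop :=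
  exists s : seq (R * 'M[R[i]]_d),
    all (fun p => unitary p.2) s /\
    \sum_(p <- s) p.1 = 0 /\
    forall A, inX A -> f A = \sum_(p <- s) p.1%:C *: (p.2 *m A *m adjmx p.2).

From HB Require Import structures.
From mathcomp Require Import all_boot all_order all_algebra perm.
From mathcomp Require Import complex reals.
From mathcomp Require Import ring lra.
Set Implicit Arguments. Unset Strict Implicit. Unset Printing Implicit Defensive.
Import Order.TTheory GRing.Theory Num.Theory.
Local Open Scope ring_scope.
Local Open Scope complex_scope.

(* Maps in zerospan_R V are real linear and preserve X, so only the
   converse needs work.  Expanding A in X along the traceless Hermitian frame
   built from matrix units shows that every real-linear map on X is a sum of
   rank-one maps A |-> tr (C A) B with C, B in X.  For C = B = E01 + E10 such a
   map is a weight-zero combination of conjugations: averaging over conjugations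
   by diagonal sign matrices with suitable signs kills every entry except (0,1)
   and (1,0), and a transposition symmetrizes the result.  The C (resp. B) for
   which the rank-one map is reachable form a real subspace of X stable under
   unitary conjugation; such a subspace containing E01 + E10 is all of X, since
   permutations, diagonal phases and a rational plane rotation produce the whole
   frame from E01 + E10. *)

Section ComplexFacts.
Variable R : realType.

Lemma conjc_i : conjc 'i = - 'i :> R[i].
Proof. by apply/eqP; rewrite eq_complex /= oppr0 !eqxx. Qed.

Lemma mulii : 'i * 'i = -1 :> R[i].
Proof. by apply/eqP; rewrite eq_complex /= !mul0r !mul1r sub0r addr0 oppr0 !eqxx. Qed.

Lemma Re_conjc_fix (z : R[i]) : conjc z = z -> (complex.Re z)%:C = z.
Proof.
case: z => a b /= [/eqP]; rewrite eq_sym -subr_eq0 opprK -mulr2n mulrn_eq0 /=.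
by move=> /eqP ->; rewrite complexr0.
Qed.

End ComplexFacts.

Section Adjoint.
Variables (R : realType) (d : nat).
Local Notation M := 'M[R[i]]_d.
Implicit Types (A B U V : M).

Lemma adjmxD A B : adjmx (A + B) = adjmx A + adjmx B.
Proof. by apply/matrixP=> i j; rewrite !mxE rmorphD. Qed.

Lemma adjmxN A : adjmx (- A) = - adjmx A.
Proof. by apply/matrixP=> i j; rewrite !mxE rmorphN. Qed.

Lemma adjmxZ (c : R[i]) A : adjmx (c *: A) = conjc c *: adjmx A.
Proof. by apply/matrixP=> i j; rewrite !mxE rmorphM. Qed.

Lemma adjmxM A B : adjmx (A *m B) = adjmx B *m adjmx A.
Proof. by rewrite /adjmx map_mxM trmx_mul. Qed.

Lemma adjmxK A : adjmx (adjmx A) = A.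
Proof. by apply/matrixP=> i j; rewrite !mxE conjcK. Qed.

Lemma adjmx_scalar (c : R[i]) : adjmx (c%:M : M) = (conjc c)%:M.
Proof. by apply/matrixP=> i j; rewrite !mxE rmorphMn eq_sym. Qed.

Lemma adjmx_delta x y : adjmx (delta_mx x y : M) = delta_mx y x.
Proof. by apply/matrixP=> a b; rewrite !mxE rmorph_nat andbC. Qed.

Lemma mxtrace_adjmx A : \tr (adjmx A) = conjc (\tr A).
Proof. by rewrite mxtrace_tr rmorph_sum; apply: eq_bigr => i _; rewrite mxE. Qed.

Lemma Re_mxtrace_herm A B : A = adjmx A -> B = adjmx B ->
  (complex.Re (\tr (A *m B)))%:C = \tr (A *m B).
Proof.
move=> hA hB; apply: Re_conjc_fix.
by rewrite -mxtrace_adjmx adjmxM -hA -hB mxtrace_mulC.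
Qed.

Definition uconj U A := U *m A *m adjmx U.

Lemma uconjD U A B : uconj U (A + B) = uconj U A + uconj U B.
Proof. by rewrite /uconj mulmxDr mulmxDl. Qed.

Lemma uconjZ U (c : R[i]) A : uconj U (c *: A) = c *: uconj U A.
Proof. by rewrite /uconj -scalemxAr -scalemxAl. Qed.

Lemma uconjM U V A : uconj (U *m V) A = uconj U (uconj V A).
Proof. by rewrite /uconj adjmxM !mulmxA. Qed.

Lemma unitaryV U : unitary U -> adjmx U *m U = 1%:M.
Proof. by move/eqP; apply: mulmx1C. Qed.

Lemma unitary1 : unitary (1%:M : M).
Proof. by rewrite /unitary adjmx_scalar conjc1 mulmx1. Qed.

Lemma unitaryM U V : unitary U -> unitary V -> unitary (U *m V).
Proof.
move=> /eqP uU /eqP uV; apply/eqP.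
by rewrite adjmxM mulmxA -(mulmxA U) uV mulmx1 uU.
Qed.

Lemma unitary_adj U : unitary U -> unitary (adjmx U).
Proof. by move=> /unitaryV uU; rewrite /unitary adjmxK uU. Qed.

Lemma uconj1 A : uconj 1%:M A = A.
Proof. by rewrite /uconj adjmx_scalar conjc1 mulmx1 mul1mx. Qed.

Lemma mxtrace_uconj U A : unitary U -> \tr (uconj U A) = \tr A.
Proof. by move=> /unitaryV uU; rewrite /uconj mxtrace_mulC mulmxA uU mul1mx. Qed.

Lemma inX_lin (a : R) A B : inX A -> inX B -> inX (a%:C *: A + B).
Proof.
move=> /andP[/eqP hA /eqP tA] /andP[/eqP hB /eqP tB]; apply/andP; split.
  by rewrite adjmxD adjmxZ conjc_real -hA -hB.
by rewrite mxtraceD mxtraceZ tA tB mulr0 addr0.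
Qed.

Lemma inX0 : inX (0 : M).
Proof.
by apply/andP; split; rewrite ?linear0 //; apply/eqP/matrixP=> i j; rewrite !mxE rmorph0.
Qed.

Lemma inXZ (a : R) A : inX A -> inX (a%:C *: A).
Proof. by move=> hA; rewrite -[_ *: A]addr0; apply: inX_lin hA inX0. Qed.

Lemma inXD A B : inX A -> inX B -> inX (A + B).
Proof. by move=> hA hB; have := inX_lin 1 hA hB; rewrite scale1r. Qed.

Lemma inX_sum (I : Type) (r : seq I) (F : I -> M) :
  (forall i, inX (F i)) -> inX (\sum_(i <- r) F i).
Proof. by move=> hF; elim: r => [|j r IH]; rewrite ?big_nil ?big_cons ?inX0 ?inXD. Qed.

Lemma inX_uconj U A : unitary U -> inX A -> inX (uconj U A).
Proof.
move=> uU /andP[/eqP hA /eqP tA]; apply/andP; split.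
  by rewrite /uconj !adjmxM adjmxK -hA mulmxA.
by rewrite mxtrace_uconj // tA.
Qed.

Lemma inX_small A : (d <= 1)%N -> inX A -> A = 0.
Proof.
case: d A => [|[|//]] A _; first by move=> _; apply/matrixP=> [[]].
case/andP=> _ /eqP; rewrite /mxtrace big_ord1 => tA.
by apply/matrixP=> a b; rewrite (ord1 a) (ord1 b) tA mxE.
Qed.

End Adjoint.

Section UnitaryCombinations.
Variables (R : realType) (d : nat).
Local Notation M := 'M[R[i]]_d.
Implicit Types (A B U W : M) (s : seq (R * M)) (g h : M -> M).

Definition uconj_comb s A : M := \sum_(p <- s) p.1%:C *: uconj p.2 A.

Definition is_ucomb g (c : R) : Prop :=
  exists s, [/\ all (fun p => unitary p.2) s, \sum_(p <- s) p.1 = c &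
    forall A, inX A -> g A = uconj_comb s A].

Lemma in_zerospan_VP g : in_zerospan_V g <-> is_ucomb g 0.
Proof. by split=> [[s [us [ws gs]]]|[s [us ws gs]]]; exists s. Qed.

Lemma inX_uconj_comb s A : all (fun p => unitary p.2) s -> inX A -> inX (uconj_comb s A).
Proof.
move=> us hA; elim: s us => [|p s IH] /=; first by rewrite /uconj_comb big_nil inX0.
by case/andP=> up us; rewrite /uconj_comb big_cons inX_lin ?inX_uconj ?IH.
Qed.

Lemma uconj_comb_lin s (a : R) A B :
  uconj_comb s (a%:C *: A + B) = a%:C *: uconj_comb s A + uconj_comb s B.
Proof.
rewrite /uconj_comb scaler_sumr -big_split; apply: eq_bigr => p _ /=.
by rewrite uconjD uconjZ scalerDr !scalerA mulrC.
Qed.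

Lemma is_ucomb_eq g h c : is_ucomb g c -> (forall A, inX A -> g A = h A) -> is_ucomb h c.
Proof. by move=> [s [us ws gs]] gh; exists s; split=> // A hA; rewrite -gh ?gs. Qed.

Lemma is_ucomb0 : is_ucomb (fun=> 0) 0.
Proof. by exists [::]; split; rewrite ?big_nil // => A _; rewrite /uconj_comb big_nil. Qed.

Lemma is_ucombD g h b c :
  is_ucomb g b -> is_ucomb h c -> is_ucomb (fun A => g A + h A) (b + c).
Proof.
move=> [s [us ws gs]] [t [ut wt ht]]; exists (s ++ t).
by split=> [|| A hA]; rewrite ?all_cat ?us ?big_cat ?ws ?wt ?gs ?ht /uconj_comb ?big_cat.
Qed.

Lemma is_ucombZ (a : R) g c : is_ucomb g c -> is_ucomb (fun A => a%:C *: g A) (a * c).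
Proof.
move=> [s [us ws gs]]; exists [seq (a * p.1, p.2) | p <- s]; split.
- by rewrite all_map.
- by rewrite big_map -ws mulr_sumr.
move=> A hA; rewrite gs // /uconj_comb big_map scaler_sumr.
by apply: eq_bigr => p _; rewrite scalerA rmorphM.
Qed.

Lemma is_ucomb0_lin (a : R) g h :
  is_ucomb g 0 -> is_ucomb h 0 -> is_ucomb (fun A => a%:C *: g A + h A) 0.
Proof. by move=> /(is_ucombZ a) hg /(is_ucombD hg); rewrite mulr0 addr0. Qed.

Lemma is_ucomb_uconj U : unitary U -> is_ucomb (uconj U) 1.
Proof.
move=> uU; exists [:: (1, U)]; split; rewrite ?big_seq1 /= ?uU //.
by move=> A _; rewrite /uconj_comb big_seq1 scale1r.
Qed.

Lemma is_ucomb_id : is_ucomb id 1.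
Proof. exact: is_ucomb_eq (is_ucomb_uconj (unitary1 R d)) (fun A _ => uconj1 A). Qed.

Lemma is_ucomb_post W g c : unitary W -> is_ucomb g c -> is_ucomb (uconj W \o g) c.
Proof.
move=> uW [s [us ws gs]]; exists [seq (p.1, W *m p.2) | p <- s]; split.
- by rewrite all_map; apply: sub_all us => p /= /(unitaryM uW).
- by rewrite big_map.
move=> A hA; rewrite /= gs // /uconj_comb big_map {1}/uconj mulmx_sumr mulmx_suml.
by apply: eq_bigr => p _; rewrite -scalemxAr -scalemxAl uconjM.
Qed.

Lemma is_ucomb_pre W g c : unitary W -> is_ucomb g c -> is_ucomb (g \o uconj W) c.
Proof.
move=> uW [s [us ws gs]]; exists [seq (p.1, p.2 *m W) | p <- s]; split.
- by rewrite all_map; apply: sub_all us => p /= /unitaryM; apply.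
- by rewrite big_map.
move=> A hA; rewrite /= gs ?inX_uconj // /uconj_comb big_map.
by apply: eq_bigr => p _; rewrite uconjM.
Qed.

Lemma is_ucomb_sum (I : Type) (r : seq I) (G : I -> M -> M) :
  (forall i, is_ucomb (G i) 0) -> is_ucomb (fun A => \sum_(i <- r) G i A) 0.
Proof.
move=> hG; elim: r => [|j r IH].
  by apply: (is_ucomb_eq is_ucomb0) => A _; rewrite big_nil.
have := is_ucombD (hG j) IH; rewrite addr0 => /is_ucomb_eq; apply=> A _.
by rewrite big_cons.
Qed.

End UnitaryCombinations.
Arguments is_ucomb0 {R d}.
Arguments is_ucomb_id {R d}.

Section MatrixUnits.
Variables (T : pzRingType) (d : nat).
Implicit Types (A : 'M[T]_d) (x y : 'I_d).

Definition symmx x y : 'M[T]_d := delta_mx x y + delta_mx y x.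
Definition diag_diffmx x y : 'M[T]_d := delta_mx x x - delta_mx y y.

Lemma symmxC x y : symmx x y = symmx y x.
Proof. exact: addrC. Qed.

Lemma mulmx_delta3 (U V : 'M[T]_d) x y a b :
  (U *m delta_mx x y *m V) a b = U a x * V y b.
Proof.
rewrite mxE (big_only1 y) // => [|k /negPf ky _]; last first.
  by rewrite mxE big1 ?mul0r // => l _; rewrite mxE ky andbF mulr0.
rewrite mxE (big_only1 x) // => [|l /negPf lx _]; last by rewrite mxE lx mulr0.
by rewrite mxE !eqxx mulr1.
Qed.

Lemma mxtrace_deltaM x y A : \tr (delta_mx x y *m A) = A y x.
Proof.
rewrite /mxtrace (big_only1 x) // => [|a /negPf ax _]; last first.
  by rewrite mxE big1 // => b _; rewrite mxE ax mul0r.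
rewrite mxE (big_only1 y) // => [|b /negPf yb _]; last by rewrite mxE yb andbF mul0r.
by rewrite mxE !eqxx mul1r.
Qed.

Lemma mxtrace_delta x y : \tr (delta_mx x y : 'M[T]_d) = (x == y)%:R.
Proof. by rewrite -[delta_mx x y]mulmx1 mxtrace_deltaM mxE eq_sym. Qed.

Lemma mxtrace_symmxM x y A : \tr (symmx x y *m A) = A y x + A x y.
Proof. by rewrite mulmxDl mxtraceD !mxtrace_deltaM. Qed.

End MatrixUnits.
Arguments symmx {T d}.
Arguments diag_diffmx {T d}.

Lemma map_symmx (T T' : pzRingType) (f : {rmorphism T -> T'}) d (x y : 'I_d) :
  map_mx f (symmx x y) = symmx x y.
Proof. by apply/matrixP=> a b; rewrite !mxE rmorphD !rmorph_nat. Qed.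

Lemma map_diag_diffmx (T T' : pzRingType) (f : {rmorphism T -> T'}) d (x y : 'I_d) :
  map_mx f (diag_diffmx x y) = diag_diffmx x y.
Proof. by apply/matrixP=> a b; rewrite !mxE rmorphB !rmorph_nat. Qed.

Section MatrixUnitsCom.
Variables (T : comPzRingType) (d : nat).
Implicit Types (A : 'M[T]_d) (x y : 'I_d).

Lemma sum_symmx_skew A :
  \sum_x \sum_y ((A y x + A x y) *: symmx x y
                 - (A y x - A x y) *: (delta_mx x y - delta_mx y x)) = 4%:R *: A.
Proof.
have e x y : (A y x + A x y) *: symmx x y - (A y x - A x y) *: (delta_mx x y - delta_mx y x)
    = 2%:R *: (A x y *: delta_mx x y) + 2%:R *: (A y x *: delta_mx y x).
  by apply/matrixP=> a b; rewrite !mxE; ring.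
under eq_bigr do under eq_bigr do rewrite e.
under eq_bigr do rewrite big_split -!scaler_sumr /=.
rewrite big_split -!scaler_sumr -matrix_sum_delta exchange_big /= -matrix_sum_delta.
by rewrite -scalerDl -natrD.
Qed.

End MatrixUnitsCom.

Section Monomial.
Variables (R : realType) (d : nat).
Local Notation M := 'M[R[i]]_d.
Implicit Types (A B : M) (v : 'I_d -> R[i]).

Definition diagc v : M := diag_mx (\row_a v a).

Lemma adjmx_diagc v : adjmx (diagc v) = diagc (conjc \o v).
Proof.
apply/matrixP=> a b; rewrite !mxE eq_sym.
by case: eqVneq => [->|_]; rewrite ?mulr1n ?mulr0n ?conjc0.
Qed.

Lemma uconj_diagcE v B a b : uconj (diagc v) B a b = v a * B a b * conjc (v b).
Proof. by rewrite /uconj adjmx_diagc mul_mx_diag mul_diag_mx !mxE. Qed.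

Lemma unitary_diagc v : (forall a, v a * conjc (v a) = 1) -> unitary (diagc v).
Proof.
move=> hv; apply/eqP/matrixP=> a b; rewrite adjmx_diagc mul_diag_mx !mxE.
by case: eqVneq => [->|_]; rewrite ?mulr1n ?hv ?mulr0n ?mulr0.
Qed.

Lemma uconj_permE (s : {perm 'I_d}) B a b : uconj (perm_mx s) B a b = B (s a) (s b).
Proof. by rewrite /uconj /adjmx map_perm_mx tr_perm_mx -col_permE -row_permE !mxE. Qed.

Lemma unitary_perm (s : {perm 'I_d}) : unitary (perm_mx s : M).
Proof. by rewrite /unitary /adjmx map_perm_mx tr_perm_mx -perm_mxM mulgV perm_mx1. Qed.

Lemma uconj_perm_delta (s : {perm 'I_d}) x y :
  uconj (perm_mx s) (delta_mx x y) = delta_mx (s^-1 x)%g (s^-1 y)%g :> M.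
Proof.
apply/matrixP=> a b; rewrite uconj_permE !mxE.
by rewrite -(inj_eq (@perm_inj _ s^-1%g) (s a)) -(inj_eq (@perm_inj _ s^-1%g) (s b)) !permK.
Qed.

Lemma uconj_diagc_delta v x y :
  uconj (diagc v) (delta_mx x y) = (v x * conjc (v y)) *: delta_mx x y :> M.
Proof.
apply/matrixP=> a b; rewrite uconj_diagcE !mxE.
by case: eqVneq => [->|_]; case: eqVneq => [->|_]; rewrite /= ?mulr1 ?mulr0 ?mul0r.
Qed.

Lemma uconj_tperm_symmx (u v x y : 'I_d) :
  uconj (perm_mx (tperm u v)) (symmx x y) = symmx (tperm u v x) (tperm u v y) :> M.
Proof. by rewrite uconjD !uconj_perm_delta tpermV. Qed.

End Monomial.

Section Twirl.
Variables (R : realType) (d : nat).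
Local Notation M := 'M[R[i]]_d.
Implicit Types (A : M) (e : 'I_d -> R).

Definition sgn (j a : 'I_d) : R := if a == j then -1 else 1.

Definition sgn_mx j : M := diagc (fun a => (sgn j a)%:C).

Lemma unitary_sgn_mx j : unitary (sgn_mx j).
Proof.
apply: unitary_diagc => a; rewrite conjc_real -rmorphM /sgn.
by case: (a == j); rewrite ?mulrNN mulr1.
Qed.

Lemma uconj_sgn_mxE j A a b : uconj (sgn_mx j) A a b = (sgn j a * sgn j b)%:C * A a b.
Proof. by rewrite uconj_diagcE conjc_real rmorphM mulrAC mulrC. Qed.

(* Averaging [A] with its conjugate by [sgn_mx j], weighted by [e j], multiplies
   the entry [A a b] by [sgn_mask e j a b]; iterating over [l] masks entrywise. *)
Definition sgn_mask e j a b : R := (1 + e j * (sgn j a * sgn j b)) / 2.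

Definition twirl e (l : seq 'I_d) A : M :=
  \matrix_(a, b) ((\prod_(j <- l) sgn_mask e j a b)%:C * A a b).

Lemma is_ucomb_twirl e l : is_ucomb (twirl e l) (\prod_(j <- l) ((1 + e j) / 2)).
Proof.
elim: l => [|j l IH].
  rewrite big_nil; apply: (is_ucomb_eq is_ucomb_id) => A _.
  by apply/matrixP=> a b; rewrite !mxE big_nil mul1r.
have := is_ucombD (is_ucombZ (1 / 2) IH)
  (is_ucombZ (e j / 2) (is_ucomb_post (unitary_sgn_mx j) IH)).
rewrite big_cons -mulrDl (_ : 1 / 2 + e j / 2 = (1 + e j) / 2); last by ring.
move=> /is_ucomb_eq; apply=> A _; apply/matrixP=> a b /=.
rewrite mxE [X in _ + X]mxE [X in X + _]mxE uconj_sgn_mxE !mxE big_cons /sgn_mask.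
by rewrite !rmorphM rmorphD rmorphM; ring.
Qed.

End Twirl.

Section Frame.
Variables (R : realType) (d : nat).
Local Notation M := 'M[R[i]]_d.
Implicit Types (A : M) (x y : 'I_d).

Definition iskewmx x y : M := 'i *: (delta_mx x y - delta_mx y x).
(* The traceless part of [symmx x y], which differs from it only when [x = y]. *)
Definition symmx0 x y : M := symmx x y - ((x == y)%:R * 2 / d%:R)%:C *: 1%:M.

Lemma mxtrace_iskewmxM x y A : \tr (iskewmx x y *m A) = 'i * (A y x - A x y).
Proof. by rewrite -scalemxAl mxtraceZ mulmxBl linearB /= !mxtrace_deltaM. Qed.

Lemma mxtrace_symmx0M x y A : \tr A = 0 -> \tr (symmx0 x y *m A) = \tr (symmx x y *m A).
Proof. by move=> tA; rewrite mulmxBl linearB /= -scalemxAl mul1mx mxtraceZ tA mulr0 subr0. Qed.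

Lemma inX_symmx x y : x != y -> inX (symmx x y : M).
Proof.
move=> xy; apply/andP; split; first by rewrite adjmxD !adjmx_delta addrC.
by rewrite mxtraceD !mxtrace_delta [y == x]eq_sym (negPf xy) mulr0n addr0.
Qed.

Lemma inX_iskewmx x y : inX (iskewmx x y).
Proof.
apply/andP; split; last by rewrite mxtraceZ linearB /= !mxtrace_delta [y == x]eq_sym subrr mulr0.
apply/eqP; rewrite /iskewmx adjmxZ adjmxD adjmxN !adjmx_delta.
by rewrite conjc_i scaleNr -scalerN opprB.
Qed.

Lemma inX_symmx0 x y : inX (symmx0 x y).
Proof.
have d_gt0 : (0 < d)%N by apply: leq_ltn_trans (ltn_ord x).
apply/andP; split.
  apply/eqP; rewrite /symmx0 adjmxD adjmxN adjmxZ adjmx_scalar conjc1 conjc_real.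
  by rewrite adjmxD !adjmx_delta [delta_mx y x + _]addrC.
apply/eqP; rewrite linearB /= mxtraceZ mxtrace1 mxtraceD !mxtrace_delta [y == x]eq_sym.
case: eqVneq => [_|_] /=; last by rewrite !mulr0n !mul0r subr0 addr0.
rewrite mulr1n mul1r fmorph_div !rmorph_nat divfK ?pnatr_eq0 -?lt0n //; exact: subrr.
Qed.

Lemma traceless_expand A : \tr A = 0 ->
  A = \sum_x \sum_y ((\tr (symmx0 x y *m A) / 4%:R) *: symmx0 x y
                     + (\tr (iskewmx x y *m A) / 4%:R) *: iskewmx x y).
Proof.
move=> tA; pose c x y := (A y x + A x y) / 4%:R * ((x == y)%:R * 2 / d%:R)%:C.
have e x y : (\tr (symmx0 x y *m A) / 4%:R) *: symmx0 x y
             + (\tr (iskewmx x y *m A) / 4%:R) *: iskewmx x y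
  = 4%:R^-1 *: ((A y x + A x y) *: symmx x y
                - (A y x - A x y) *: (delta_mx x y - delta_mx y x)) - c x y *: 1%:M.
  have ii (t : R[i]) : 'i * t / 4%:R * 'i = - (t / 4%:R).
    by rewrite mulrAC [_ * 'i]mulrAC mulii mulN1r mulNr.
  rewrite mxtrace_symmx0M // mxtrace_symmxM mxtrace_iskewmxM /symmx0 /iskewmx scalerA ii.
  by apply/matrixP=> a b; rewrite !mxE /c; ring.
have c0 : \sum_x \sum_y c x y = 0.
  rewrite (eq_bigr (fun x => (A x x + A x x) / 4%:R * (2 / d%:R)%:C)) => [|x _].
    by rewrite -mulr_suml -mulr_suml big_split /= [\sum_i A i i]tA addr0 !mul0r.
  rewrite (big_only1 x) // => [|y xy _]; first by rewrite /c eqxx mul1r.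
  by rewrite /c eq_sym (negPf xy) !mul0r rmorph0 mulr0.
under eq_bigr do under eq_bigr do rewrite e.
under eq_bigr do rewrite sumrB -scaler_sumr -scaler_suml.
rewrite sumrB -scaler_sumr -scaler_suml c0 sum_symmx_skew scale0r subr0.
by rewrite scalerA mulVf ?pnatr_eq0 // scale1r.
Qed.

Definition coordX B A : R := complex.Re (\tr (B *m A)) / 4.

Lemma coordXE B A : inX B -> inX A -> (coordX B A)%:C = \tr (B *m A) / 4%:R.
Proof.
move=> /andP[/eqP hB _] /andP[/eqP hA _].
by rewrite fmorph_div rmorph_nat; congr (_ / _); exact: Re_mxtrace_herm.
Qed.

Lemma inX_expand A : inX A ->
  A = \sum_x \sum_y ((coordX (symmx0 x y) A)%:C *: symmx0 x y
                     + (coordX (iskewmx x y) A)%:C *: iskewmx x y).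
Proof.
move=> hA; have /andP[_ /eqP tA] := hA; rewrite {1}(traceless_expand tA).
by apply: eq_bigr => x _; apply: eq_bigr => y _; rewrite !coordXE ?inX_symmx0 ?inX_iskewmx.
Qed.

End Frame.
Arguments iskewmx {R d}.
Arguments symmx0 {R d}.

Lemma prod_natb (R : pzSemiRingType) (T : Type) (r : seq T) (P : pred T) :
  \prod_(j <- r) (P j)%:R = (all P r)%:R :> R.
Proof.
by elim: r => [|j r IH]; rewrite ?big_nil ?big_cons //= IH; case: (P j); rewrite ?mul1r ?mul0r.
Qed.

Section PairTwirl.
Variables (R : realType) (d : nat) (i0 i1 : 'I_d).
Hypothesis i01 : i0 != i1.
Local Notation M := 'M[R[i]]_d.

Definition pair_sign (j : 'I_d) : R := if (j == i0) || (j == i1) then -1 else 1.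

Lemma sgn_mask_pairE j a b :
  sgn_mask pair_sign j a b = (((j == i0) || (j == i1)) == ((a == j) (+) (b == j)))%:R.
Proof.
rewrite /sgn_mask /pair_sign /sgn.
by case: (_ || _); case: (a == j); case: (b == j); rewrite /= ?mulr1n ?mulr0n; lra.
Qed.

Lemma all_sgn_mask_pair a b :
  all (fun j => ((j == i0) || (j == i1)) == ((a == j) (+) (b == j))) (enum 'I_d) =
  ((a == i0) && (b == i1)) || ((a == i1) && (b == i0)).
Proof.
have i10 : i1 != i0 by rewrite eq_sym.
apply/allP/idP => [hab|hab j _].
  have /eqP/esym h0 := hab i0 (mem_enum _ _); have /eqP/esym h1 := hab i1 (mem_enum _ _).
  rewrite !eqxx (negPf i10) /= in h0 h1.
  case: (eqVneq a i0) h0 h1 => [->|_] /= h0 h1; first by rewrite (negPf i01) /= in h1; rewrite h1.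
  by move/eqP: h0 => hb; rewrite hb (negPf i01) addbF in h1; rewrite hb h1 eqxx.
rewrite [a == j]eq_sym [b == j]eq_sym.
by case/orP: hab => /andP[/eqP-> /eqP->]; case: (eqVneq j i0) => [->|];
  rewrite ?(negPf i01) ?(negPf i10) //= addbC.
Qed.

Lemma twirl_pairE (A : M) :
  twirl pair_sign (enum 'I_d) A = A i0 i1 *: delta_mx i0 i1 + A i1 i0 *: delta_mx i1 i0.
Proof.
have i10 : i1 != i0 by rewrite eq_sym.
apply/matrixP=> a b; rewrite !mxE (eq_bigr _ (fun j _ => sgn_mask_pairE j a b)).
rewrite prod_natb all_sgn_mask_pair rmorph_nat.
case: (boolP ((a == i0) && (b == i1))) => [/andP[/eqP-> /eqP->]|_].
  by rewrite (negPf i01) mulr0 addr0 mulr1 mul1r.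
case: (boolP ((a == i1) && (b == i0))) => [/andP[/eqP-> /eqP->]|_].
  by rewrite mulr0 add0r mulr1 mul1r.
by rewrite !mulr0 mul0r addr0.
Qed.

(* The twirl keeps only the entries (i0, i1) and (i1, i0), and its weight
   vanishes because of the factor at [i0]; adding its conjugate by the
   transposition of i0 and i1 symmetrizes it. *)
Lemma is_ucomb_pair : is_ucomb (fun A : M => (A i0 i1 + A i1 i0) *: symmx i0 i1) 0.
Proof.
have w0 : \prod_(j <- enum 'I_d) ((1 + pair_sign j) / 2) = 0.
  by rewrite (big_rem i0) ?mem_enum //= /pair_sign eqxx subrr mul0r mul0r.
have := is_ucombD (is_ucomb_twirl pair_sign (enum 'I_d))
  (is_ucomb_post (unitary_perm R (tperm i0 i1)) (is_ucomb_twirl pair_sign (enum 'I_d))).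
rewrite w0 addr0 => /is_ucomb_eq; apply=> A _ /=.
rewrite twirl_pairE uconjD !uconjZ !uconj_perm_delta tpermV tpermL tpermR.
by rewrite /symmx scalerDl !scalerDr addrACA [_ *: delta_mx i1 i0 + _]addrC.
Qed.

End PairTwirl.

Section Rotation.
Variables (F : realFieldType) (d : nat) (x y : 'I_d).
Hypothesis xy : x != y.

(* The rotation of the (x, y)-plane with cosine 3/5 and sine 4/5: rational
   entries avoid square roots, and conjugating [symmx x y] by it produces
   [diag_diffmx x y] (see [diag_diffmx_rot]). *)
Definition plane_rot_entry (a b : 'I_d) : F :=
  if a == x then (if b == x then 3 / 5 else if b == y then - (4 / 5) else 0)
  else if a == y then (if b == x then 4 / 5 else if b == y then 3 / 5 else 0)
  else (a == b)%:R.

Definition plane_rot : 'M[F]_d := \matrix_(a, b) plane_rot_entry a b.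

Lemma plane_rot_entry_outr a b : b != x -> b != y -> plane_rot_entry a b = (a == b)%:R.
Proof.
move=> /negPf bx /negPf byy; rewrite /plane_rot_entry bx byy.
case: eqVneq => [->|_]; first by rewrite eq_sym bx.
by case: eqVneq => [->|_] //; rewrite eq_sym byy.
Qed.

Lemma plane_rot_entry_outl a b : a != x -> a != y -> plane_rot_entry a b = (a == b)%:R.
Proof. by move=> /negPf ax /negPf ay; rewrite /plane_rot_entry ax ay. Qed.

Lemma plane_rot_orthogonal : plane_rot *m plane_rot^T = 1%:M.
Proof.
have yx : y != x by rewrite eq_sym.
apply/matrixP=> a b; rewrite !mxE.
case: (boolP ((a == x) || (a == y))) => ha.
  rewrite (bigD1 x) // (bigD1 y) 1?eq_sym //= big1 => [|k /andP[kx ky]]; last first.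
    rewrite !mxE plane_rot_entry_outr // [plane_rot_entry b k]plane_rot_entry_outr //.
    by case/orP: ha => /eqP ->;
      rewrite ?(negPf kx) ?(negPf ky) ![_ == k]eq_sym ?(negPf kx) ?(negPf ky) mul0r.
  rewrite !mxE addr0.
  case: (eqVneq b x) => [->|bx]; [|case: (eqVneq b y) => [->|byy]];
  case/orP: ha => /eqP ->; rewrite /plane_rot_entry ?eqxx ?(negPf yx) ?(negPf xy) /=;
  rewrite ?(negPf bx) ?(negPf byy) ?[x == b]eq_sym ?[y == b]eq_sym ?(negPf bx) ?(negPf byy) /=;
  rewrite ?mulr1n ?mulr0n; lra.
move: ha; rewrite negb_or => /andP[ax ay].
rewrite (big_only1 a) // => [|k /negPf ka _]; last first.
  by rewrite !mxE plane_rot_entry_outl // eq_sym ka mul0r.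
by rewrite !mxE plane_rot_entry_outl // eqxx mul1r plane_rot_entry_outr // eq_sym.
Qed.

Lemma diag_diffmx_rot :
  diag_diffmx x y
  = (- 7 / 24) *: symmx x y + (- 25 / 24) *: (plane_rot *m symmx x y *m plane_rot^T).
Proof.
have yx : y != x by rewrite eq_sym.
apply/matrixP=> a b.
have e : (plane_rot *m symmx x y *m plane_rot^T) a b
    = plane_rot_entry a x * plane_rot_entry b y + plane_rot_entry a y * plane_rot_entry b x.
  by rewrite mulmxDr mulmxDl mxE !mulmx_delta3 !mxE.
rewrite [RHS]mxE [X in _ = _ + X]mxE e !mxE.
case: (eqVneq a x) => [->|ax]; [|case: (eqVneq a y) => [->|ay]];
case: (eqVneq b x) => [->|bx]; try (case: (eqVneq b y) => [->|byy]);
rewrite /plane_rot_entry ?eqxx ?(negPf yx) ?(negPf xy) /=;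
rewrite ?(negPf ax) ?(negPf ay) ?(negPf bx) ?(negPf byy) /=;
rewrite ?[x == a]eq_sym ?[y == a]eq_sym ?[x == b]eq_sym ?[y == b]eq_sym;
rewrite ?(negPf ax) ?(negPf ay) ?(negPf bx) ?(negPf byy) /= ?mulr1n ?mulr0n; lra.
Qed.

End Rotation.

Section RealUnitary.
Variables (R : realType) (d : nat).
Local Notation realC := (real_complex R).
Implicit Types (Q B : 'M[R]_d).

Lemma adjmx_real Q : adjmx (map_mx realC Q) = map_mx realC Q^T.
Proof. by apply/matrixP=> a b; rewrite !mxE conjc_real. Qed.

Lemma unitary_real Q : Q *m Q^T = 1%:M -> unitary (map_mx realC Q).
Proof. by move=> QQt; rewrite /unitary adjmx_real -map_mxM QQt map_mx1. Qed.

Lemma uconj_real Q B : uconj (map_mx realC Q) (map_mx realC B) = map_mx realC (Q *m B *m Q^T).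
Proof. by rewrite /uconj adjmx_real !map_mxM. Qed.

End RealUnitary.

Section Spanning.
Variables (R : realType) (d : nat) (i0 i1 : 'I_d).
Hypothesis i01 : i0 != i1.
Local Notation M := 'M[R[i]]_d.
Variable P : M -> Prop.
Hypothesis P_lin : forall (a : R) B C, P B -> P C -> P (a%:C *: B + C).
Hypothesis P_uconj : forall U B, unitary U -> P B -> P (uconj U B).
Hypothesis P_symmx01 : P (symmx i0 i1).

Let P0 : P 0.
Proof. by have := P_lin (-1) P_symmx01 P_symmx01; rewrite rmorphN1 scaleN1r addNr. Qed.

Let PZ (a : R) B : P B -> P (a%:C *: B).
Proof. by move=> PB; have := P_lin a PB P0; rewrite addr0. Qed.

Let PD B C : P B -> P C -> P (B + C).
Proof. by move=> PB PC; have := P_lin 1 PB PC; rewrite rmorph1 scale1r. Qed.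

Let P_sum (I : Type) (r : seq I) (F : I -> M) : (forall i, P (F i)) -> P (\sum_(i <- r) F i).
Proof. by move=> PF; elim: r => [|j r IH]; rewrite ?big_nil ?big_cons; [apply: P0 | apply: PD]. Qed.

Let P_symmx x y : x != y -> P (symmx x y).
Proof.
have i10 : i1 != i0 by rewrite eq_sym.
have P0y y' : y' != i0 -> P (symmx i0 y').
  move=> y'0; have := P_uconj (unitary_perm R (tperm i1 y')) P_symmx01.
  by rewrite uconj_tperm_symmx tpermL tpermD // eq_sym.
case: (eqVneq x i0) => [-> xy|x0 xy]; first by apply: P0y; rewrite eq_sym.
have := P_uconj (unitary_perm R (tperm i0 y)) (P0y x x0).
by rewrite symmxC uconj_tperm_symmx tpermL tpermD // eq_sym.
Qed.

Let P_iskewmx x y : P (iskewmx x y).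
Proof.
case: (eqVneq x y) => [->|xy]; first by rewrite /iskewmx subrr scaler0.
pose v a := if a == x then 'i else 1 : R[i].
have uv : unitary (diagc v).
  apply: unitary_diagc => a; rewrite /v; case: (a == x); last by rewrite conjc1 mulr1.
  by rewrite conjc_i mulrN mulii opprK.
have := P_uconj uv (P_symmx xy); rewrite uconjD !uconj_diagc_delta /v eqxx eq_sym (negPf xy).
by rewrite conjc1 conjc_i mulr1 mul1r /iskewmx scalerBr scaleNr.
Qed.

Let P_diag_diffmx x y : x != y -> P (diag_diffmx x y).
Proof.
move=> xy; have := congr1 (map_mx (real_complex R)) (diag_diffmx_rot R xy).
rewrite map_diag_diffmx map_mxD !map_mxZ -uconj_real !map_symmx => ->.
have uQ := unitary_real (plane_rot_orthogonal R xy).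
exact: P_lin (P_symmx xy) (PZ _ (P_uconj uQ (P_symmx xy))).
Qed.

Let P_symmx0 x y : P (symmx0 x y).
Proof.
case: (eqVneq x y) => [<-|xy]; last first.
  by rewrite /symmx0 (negPf xy) !mul0r rmorph0 scale0r subr0; apply: P_symmx.
have d_gt0 : (0 < d)%N by apply: leq_ltn_trans (ltn_ord x).
have e : 2 / d%:R *+ d = 2 :> R by rewrite -mulr_natr divfK // pnatr_eq0 -lt0n.
have -> : symmx0 x x = \sum_z (2 / d%:R)%:C *: (diag_diffmx x z : M).
  rewrite -scaler_sumr sumrB sumr_const card_ord -mx1_sum_delta /symmx0 eqxx /= mul1r.
  by rewrite scalerBr -scalerMnr scalerMnl -rmorphMn e rmorph_nat scaler_nat mulr2n.
apply: P_sum => z; apply: PZ; case: (eqVneq x z) => [<-|]; last exact: P_diag_diffmx.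
by rewrite /diag_diffmx subrr.
Qed.

Lemma inX_ind A : inX A -> P A.
Proof.
move=> hA; rewrite (inX_expand hA); do 2![apply: P_sum => ?].
by apply: PD; apply: PZ; [apply: P_symmx0 | apply: P_iskewmx].
Qed.

End Spanning.

Section RankOne.
Variables (R : realType) (d : nat).
Local Notation M := 'M[R[i]]_d.
Implicit Types (A B C : M).

Definition rank_one C B A : M := \tr (C *m A) *: B.

Lemma is_ucomb_rank_one C B : inX C -> inX B -> is_ucomb (rank_one C B) 0.
Proof.
case: (leqP d 1) => [d1|d2] hC hB.
  apply: (is_ucomb_eq is_ucomb0) => A hA.
  by rewrite (inX_small d1 hA) /rank_one mulmx0 linear0 scale0r.
pose i0 : 'I_d := Ordinal (ltnW d2); pose i1 : 'I_d := Ordinal d2.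
have i01 : i0 != i1 by [].
have rank_one_symmx B' : inX B' -> is_ucomb (rank_one (symmx i0 i1) B') 0.
  apply: (inX_ind i01 (P := fun B => is_ucomb (rank_one (symmx i0 i1) B) 0))
    => [a B1 B2 h1 h2|U B1 uU h|].
  - apply: (is_ucomb_eq (is_ucomb0_lin a h1 h2)) => A _.
    by rewrite /rank_one scalerDr !scalerA mulrC.
  - by apply: (is_ucomb_eq (is_ucomb_post uU h)) => A _; rewrite /= uconjZ.
  apply: (is_ucomb_eq (is_ucomb_pair R i01)) => A _.
  by rewrite /rank_one mxtrace_symmxM addrC.
move: C hC; apply: (inX_ind i01 (P := fun C => is_ucomb (rank_one C B) 0))
  => [a C1 C2 h1 h2|U C1 uU h|]; last exact: rank_one_symmx.
- apply: (is_ucomb_eq (is_ucomb0_lin a h1 h2)) => A _.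
  by rewrite /rank_one mulmxDl -scalemxAl mxtraceD mxtraceZ scalerDl scalerA.
apply: (is_ucomb_eq (is_ucomb_pre (unitary_adj uU) h)) => A _.
by rewrite /rank_one /uconj /= adjmxK !mulmxA mxtrace_mulC !mulmxA.
Qed.

End RankOne.

Section RealLinear.
Variables (R : realType) (d : nat) (f : 'M[R[i]]_d -> 'M[R[i]]_d).
Hypothesis linf : real_linear_on_X f.
Local Notation M := 'M[R[i]]_d.

Lemma rlin0 : f 0 = 0.
Proof.
have := linf.2 1 0 0 (inX0 R d) (inX0 R d); rewrite scaler0 addr0 rmorph1 scale1r.
by rewrite -{1}[f 0]addr0 => /addrI <-.
Qed.

Lemma rlinZ (a : R) A : inX A -> f (a%:C *: A) = a%:C *: f A.
Proof. by move=> hA; have := linf.2 a A 0 hA (inX0 R d); rewrite !addr0 rlin0 addr0. Qed.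

Lemma rlinD A B : inX A -> inX B -> f (A + B) = f A + f B.
Proof. by move=> hA hB; have := linf.2 1 A B hA hB; rewrite rmorph1 !scale1r. Qed.

Lemma rlin_sum (I : Type) (r : seq I) (F : I -> M) :
  (forall i, inX (F i)) -> f (\sum_(i <- r) F i) = \sum_(i <- r) f (F i).
Proof.
move=> hF; elim: r => [|j r IH]; first by rewrite !big_nil rlin0.
by rewrite !big_cons rlinD ?IH ?inX_sum.
Qed.

Lemma rlin_expand A : inX A ->
  f A = \sum_x \sum_y (rank_one (symmx0 x y) (4%:R^-1 *: f (symmx0 x y)) A
                       + rank_one (iskewmx x y) (4%:R^-1 *: f (iskewmx x y)) A).
Proof.
have inX_term x y : inX ((coordX (symmx0 x y) A)%:C *: symmx0 x y
                         + (coordX (iskewmx x y) A)%:C *: iskewmx x y).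
  by rewrite inXD ?inXZ ?inX_symmx0 ?inX_iskewmx.
move=> hA; rewrite {1}(inX_expand hA) rlin_sum => [|x]; last exact: inX_sum.
apply: eq_bigr => x _; rewrite rlin_sum //; apply: eq_bigr => y _.
rewrite rlinD ?inXZ ?inX_symmx0 ?inX_iskewmx // !rlinZ ?inX_symmx0 ?inX_iskewmx //.
by rewrite /rank_one !scalerA !coordXE ?inX_symmx0 ?inX_iskewmx.
Qed.

End RealLinear.

Theorem proposition1 (R : realType) (d : nat) (f : 'M[R[i]]_d -> 'M[R[i]]_d) :
  in_zerospan_V f <-> real_linear_on_X f.
Proof.
split=> [/in_zerospan_VP[s [us _ fs]] | linf].
  split=> [A hA | a A B hA hB]; first by rewrite fs // inX_uconj_comb.
  by rewrite !fs ?inX_lin // uconj_comb_lin.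
apply/in_zerospan_VP/(is_ucomb_eq _ (fun A hA => esym (rlin_expand linf hA))).
apply: is_ucomb_sum => x; apply: is_ucomb_sum => y; rewrite -[0 : R]addr0.
have inX_f B : inX B -> inX (4%:R^-1 *: f B).
  by move=> hB; rewrite -(rmorph_nat (real_complex R)) -fmorphV inXZ ?linf.1.
by apply: is_ucombD; apply: is_ucomb_rank_one; rewrite ?inX_f ?inX_symmx0 ?inX_iskewmx.
Qed.
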